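(* Let $a$ be a primitive element of $GF(2^m)$, $n\le 2^m-1$, and $1\le k\le d\le n-1$. Let $g(x)=\prod_{j=1}^{n-k}(x-a^j)=\sum_{i=0}^{n-k}g_ix^i$ and $f(x)=\prod_{j=1}^{n-d}(x-a^j)=\sum_{i=0}^{n-d}f_ix^i$. Let $G_k$ be the $k\times n$ matrix whose $r$-th row ($r=1,\dots,k$) is $(0,\dots,0,g_0,g_1,\dots,g_{n-k},0,\dots,0)$ with $r-1$ leading zeros, and let $B$ be the $(d-k)\times n$ matrix whose $r$-th row ($r=1,\dots,d-k$) is $(0,\dots,0,f_0,f_1,\dots,f_{n-d},0,\dots,0)$ with $r-1$ leading zeros. Then the $d\times n$ matrix $G=\begin{bmatrix}G_k\\ B\end{bmatrix}$ has rank $d$; that is, it is a generator matrix of the $[n,d]$ Reed–Solomon code generated by $f(x)$ (the code underlying the minimum-bandwidth regenerating code).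
   Context: The $[n,d]$ Reed–Solomon code generated by $f(x)$ consists of all vectors $(c_0,\dots,c_{n-1})\in GF(2^m)^n$ whose polynomial $\sum_i c_ix^i$ is divisible by $f(x)$. *)

From HB Require Import structures.
From mathcomp Require Import all_boot all_order all_algebra all_field.
Set Implicit Arguments. Unset Strict Implicit. Unset Printing Implicit Defensive.
Import GRing.Theory.
Local Open Scope ring_scope.

Definition rs_genpoly (F : fieldType) (a : F) (t : nat) : {poly F} :=
  \prod_(1 <= j < t.+1) ('X - (a ^+ j)%:P).

Definition shift_mx (F : fieldType) (p n : nat) (h : {poly F}) : 'M[F]_(p, n) :=
  \matrix_(r < p, j < n) (if (r <= j)%N then h`_(j - r) else 0).

Definition vec_poly (F : fieldType) (n : nat) (c : 'rV[F]_n) : {poly F} :=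
  \sum_(i < n) c 0 i *: 'X^i.

Definition poly_code (F : fieldType) (n : nat) (f : {poly F}) : pred 'rV[F]_n :=
  [pred c | f %| vec_poly c].
Arguments poly_code F n f : clear implicits.
Arguments poly_code {F} n f.

From HB Require Import structures.
From mathcomp Require Import all_boot all_order all_algebra all_field.
From mathcomp Require Import zify.
Import GRing.Theory.
Local Open Scope ring_scope.

(* Write g = f * h with deg h = d - k.  A row vector (s, t) times G is the
   coefficient vector of (s h + t) f, and s h + t ranges bijectively over the
   polynomials of degree < d: this is Euclidean division by h.  Since
   deg f + d = n, multiplying by f then maps this space onto the polynomials of
   degree < n divisible by f.  Only degrees matter. *)

Lemma mul_shift_mx (F : fieldType) (p n : nat) (h : {poly F}) (u : 'rV[F]_p) :
  u *m shift_mx p n h = poly_rV (rVpoly u * h).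
Proof.
rewrite {2}(row_sum_delta u) linear_sum /= mulr_suml linear_sum /= mulmx_sum_row.
apply: eq_bigr => i _; rewrite linearZ /= rVpoly_delta -scalerAl linearZ /=.
congr (_ *: _); apply/rowP => j; rewrite !mxE coefXnM leqNgt.
by case: ltnP.
Qed.

Lemma vec_polyE (F : fieldType) (n : nat) (c : 'rV[F]_n) : vec_poly c = rVpoly c.
Proof. by rewrite /vec_poly /rVpoly poly_def; apply: eq_bigr => i _; rewrite valK. Qed.

Lemma size_rs_genpoly (F : fieldType) (a : F) (t : nat) :
  size (rs_genpoly a t) = t.+1.
Proof. by rewrite size_prod_XsubC size_iota subn1. Qed.

Lemma rs_genpoly_split (F : fieldType) (a : F) (s t : nat) : (s <= t)%N ->
  rs_genpoly a t =
  rs_genpoly a s * \prod_(s.+1 <= j < t.+1) ('X - (a ^+ j)%:P).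
Proof. by move=> le_st; rewrite /rs_genpoly -big_cat_nat. Qed.

Section ShiftStack.

Variables (F : fieldType) (n k e : nat) (f h : {poly F}).
Hypotheses (f_neq0 : f != 0) (size_h : size h = e.+1).
Hypothesis size_f_dim : (size f + (k + e) = n.+1)%N.

Let G := col_mx (shift_mx k n (f * h)) (shift_mx e n f).

Lemma size_stack_poly (s : 'rV[F]_k) (t : 'rV[F]_e) :
  (size ((rVpoly s * h + rVpoly t) * f)%R <= n)%N.
Proof.
have size_s : (size (rVpoly s) <= k)%N := size_poly _ _.
have size_t : (size (rVpoly t) <= e)%N := size_poly _ _.
have size_sh := size_polyMleq (rVpoly s) h.
have size_sum : (size (rVpoly s * h + rVpoly t)%R <= k + e)%N.
  apply: leq_trans (size_polyD _ _) _; rewrite geq_max; apply/andP; split.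
    by apply: leq_trans size_sh _; rewrite size_h; lia.
  exact: leq_trans size_t (leq_addl _ _).
apply: leq_trans (size_polyMleq _ _) _; lia.
Qed.

Lemma mul_stack_mx (s : 'rV[F]_k) (t : 'rV[F]_e) :
  row_mx s t *m G = poly_rV ((rVpoly s * h + rVpoly t) * f).
Proof.
by rewrite mul_row_col !mul_shift_mx -linearD mulrDl -mulrA (mulrC h f).
Qed.

Lemma row_free_stack : row_free G.
Proof.
apply: inj_row_free => v; rewrite -[v]hsubmxK mul_stack_mx => /(congr1 rVpoly).
rewrite poly_rV_K ?size_stack_poly // linear0 => /eqP.
rewrite mulf_eq0 (negbTE f_neq0) orbF => /eqP sum_eq0.
have size_t : (size (rVpoly (rsubmx v)) < size h)%N by rewrite size_h ltnS size_poly.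
have s0 : rVpoly (lsubmx v) = 0.
  by rewrite -(divp_addl_mul_small (rVpoly (lsubmx v)) size_t) sum_eq0 div0p.
have t0 : rVpoly (rsubmx v) = 0.
  by rewrite -(modp_addl_mul_small (rVpoly (lsubmx v)) size_t) sum_eq0 mod0p.
by rewrite -(rVpolyK (lsubmx v)) -(rVpolyK (rsubmx v)) s0 t0 !linear0 row_mx0.
Qed.

Lemma rank_stack : \rank G = (k + e)%N.
Proof. exact/eqP/row_free_stack. Qed.

Lemma submx_stackE (c : 'rV[F]_n) : (c <= G)%MS = (f %| rVpoly c).
Proof.
apply/idP/idP.
  case/submxP => u ->; rewrite -[u]hsubmxK mul_stack_mx.
  by rewrite poly_rV_K ?size_stack_poly // dvdp_mull.
case/dvdpP=> q c_eq.
have size_q : (size q <= k + e)%N.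
  have [->|q_neq0] := eqVneq q 0; first by rewrite size_poly0.
  have : (size (rVpoly c) <= n)%N := size_poly _ _.
  have := size_poly_gt0 q; rewrite q_neq0 c_eq size_mul //.
  (* [lia] sees the sizes here and in [size_f_dim] as distinct atoms: they
     differ only in implicit structure instances. *)
  by move: size_f_dim; move: (size f) (size q) => sf sq; lia.
have h_neq0 : h != 0 by rewrite -size_poly_eq0 size_h.
have size_div : (size (q %/ h)%R <= k)%N by rewrite size_divp // size_h leq_subLR addnC.
have size_mod : (size (q %% h)%R <= e)%N by have := ltn_modpN0 q h_neq0; rewrite size_h.
have -> : c = row_mx (poly_rV (q %/ h) : 'rV_k) (poly_rV (q %% h) : 'rV_e) *m G.
  by rewrite mul_stack_mx !poly_rV_K // -divp_eq -c_eq rVpolyK.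
exact: submxMl.
Qed.

End ShiftStack.

Theorem theorem3 (F : finFieldType) (m : nat) (a : F) (n k d : nat) :
  #|F| = (2 ^ m)%N ->
  (2 ^ m).-1.-primitive_root a ->
  (n <= (2 ^ m).-1)%N ->
  (1 <= k)%N -> (k <= d)%N -> (d <= n.-1)%N ->
  let g := rs_genpoly a (n - k) in
  let f := rs_genpoly a (n - d) in
  let G := col_mx (shift_mx k n g) (shift_mx (d - k) n f) in
  \rank G = d /\ (forall c : 'rV[F]_n, (c <= G)%MS = (c \in poly_code n f)).
Proof.
move=> _ _ _ k_gt0 le_kd le_dn g f G.
set h := \prod_((n - d).+1 <= j < (n - k).+1) ('X - (a ^+ j)%:P).
have g_eq : g = f * h by apply: rs_genpoly_split; lia.
have size_h : size h = (d - k).+1.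
  by rewrite size_prod_XsubC size_iota; lia.
have f_neq0 : f != 0 by rewrite -size_poly_eq0 size_rs_genpoly.
have size_f_dim : (size f + (k + (d - k)) = n.+1)%N.
  by rewrite size_rs_genpoly; lia.
rewrite /G g_eq; split.
  by rewrite rank_stack //; lia.
by move=> c; rewrite inE /= vec_polyE submx_stackE.
Qed.
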